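(* Let $F$ be a finite field with $q=|F|$ and let $u,v\in\mathbb{N}$. For each $y=(y_1,\ldots,y_{u+v-1})\in F^{u+v-1}$ define the $v\times v$ matrix $J_{u,v}(y)=(y_{u-i+j})_{1\le i\le v,\,1\le j\le v}$, where $y_0:=1$ and $y_k:=0$ for all $k<0$. Then the number of $y\in F^{u+v-1}$ satisfying $\det(J_{u,v}(y))=0$ is $q^{u+v-2}$.
   Context: $\mathbb{N}=\{0,1,2,\ldots\}$. *)

From HB Require Import structures.
From mathcomp Require Import all_boot all_order all_algebra all_field.
Set Implicit Arguments. Unset Strict Implicit. Unset Printing Implicit Defensive.
Import Order.TTheory GRing.Theory Num.Theory.
Local Open Scope ring_scope.

(* y_k for y = (y_1,...,y_n) in F^n (stored 0-indexed as a row vector),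
   extended by y_0 := 1 and y_k := 0 for k < 0 (and, harmlessly, 0 for k > n,
   which never occurs in J below). *)
Definition yext (F : fieldType) (n : nat) (y : 'rV[F]_n) (k : int) : F :=
  match k with
  | Posz 0 => 1
  | Posz m.+1 => if insub m is Some i then y ord0 i else 0
  | Negz _ => 0
  end.

(* J_{u,v}(y) = (y_{u-i+j})_{1<=i,j<=v}; with 0-indexed ordinals i,j the
   index u-(i+1)+(j+1) equals u-i+j. *)
Definition Jmat (F : fieldType) (u v : nat) (y : 'rV[F]_(u + v - 1)) : 'M[F]_v :=
  \matrix_(i < v, j < v) yext y (u%:Z - (i : nat)%:Z + (j : nat)%:Z).

From HB Require Import structures.
From mathcomp Require Import all_boot all_order all_algebra all_field.
From mathcomp Require Import zify.
Import Order.TTheory GRing.Theory Num.Theory.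
Local Open Scope ring_scope.
Set Implicit Arguments. Unset Strict Implicit. Unset Printing Implicit Defensive.

(* Put n = u + v - 1, q = #|F| and Y = 1 + y_1 X + ... + y_n X^n ([series y]).
   Reading a row c of length v as a polynomial C of degree < v, entry j of
   c J(y) is the coefficient of degree u + j of Y C, so the left kernel K(y) of
   J(y) consists of the C for which Y C has no terms of degree u..n
   ([annih v y u]).  Let L(y) be the set of C of degree < v - 1 for which the
   terms of degree u - 1..n of Y C vanish ([lower_annih v y u]).  If J(y) is
   singular, uniqueness of Pade approximants shows that K(y) is fibred over the
   top coefficient of a kernel vector of maximal degree, with fibre L(y), so
   |K(y)| = q |L(y)|; otherwise K(y) = L(y) = 0.  Summing over y gives
   (q - 1) N + q sum |L| = sum |K| + (q - 1) q^n, where N counts singular J(y).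
   Both sums are computed the other way round: if C <> 0 has lowest nonzero
   coefficient in degree e, then y |-> (coefficients e+1..e+n of Y C) is a
   triangular bijection, so the y for which degrees a..n of Y C vanish number
   q^(a-1) when e < a, and none otherwise.  This yields the same identity with
   q^(u+v-2) in place of N. *)

Section PolyLemmas.
Variable F : fieldType.
Implicit Types p q r : {poly F}.

Lemma coefM_low p q i j :
  (forall k, (k < i)%N -> p`_k = 0) -> (forall k, (k < j)%N -> q`_k = 0) ->
  (p * q)`_(i + j) = p`_i * q`_j.
Proof.
move=> p_low q_low; rewrite coefM (bigD1 (@Ordinal (i + j).+1 i (leq_addr j i))) //=.
rewrite [X in _ + X]big1 ?addr0 ?addKn // => k /eqP/val_eqP /= neq_ki.
case: (ltngtP k i) neq_ki => [lt_ki|lt_ik|->] //; first by rewrite p_low ?mul0r.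
by rewrite q_low ?mulr0 //; have := ltn_ord k; lia.
Qed.

Lemma take_polyMr N p q : take_poly N (p * take_poly N q) = take_poly N (p * q).
Proof.
apply/polyP => k; rewrite !coef_take_poly; case: ifP => // lt_kN.
rewrite !coefM; apply: eq_bigr => j _; rewrite coef_take_poly.
by rewrite (leq_ltn_trans (leq_subr j k) lt_kN).
Qed.

(* Uniqueness of Pade approximants: [take(s q) p] and [take(s p) q] agree modulo
   [X^N] and both have size < [N], so they are equal; then compare sizes. *)
Lemma size_take_polyM_lt s p q N a :
  (0 < a)%N -> (size q + a <= N)%N -> (size p < size q)%N ->
  (size (take_poly N (s * p)) <= a)%N -> (size (take_poly N (s * q)) <= a)%N ->
  (size (take_poly N (s * p)) < a)%N.
Proof.
set tp := take_poly N (s * p); set tq := take_poly N (s * q).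
move=> a_gt0 le_qa_N lt_pq le_tp_a le_tq_a.
have tq_p : tq * p = tp * q.
  have small r r' :
      (size r <= a)%N -> (size r' <= size q)%N -> take_poly N (r * r') = r * r'.
    move=> le_r le_r'; apply: take_poly_id; apply: leq_trans (size_polyMleq _ _) _; lia.
  rewrite -(small tq p) ?(ltnW lt_pq) // -(small tp q) //.
  rewrite [tq * p]mulrC [tp * q]mulrC !take_polyMr.
  by rewrite mulrCA [in RHS]mulrCA [p * q]mulrC.
have [->|tp_neq0] := eqVneq tp 0; first by rewrite size_poly0.
have q_neq0 : q != 0 by rewrite -size_poly_gt0; lia.
have tpq_neq0 : tp * q != 0 by rewrite mulf_neq0.
have p_neq0 : p != 0 by apply: contraNneq tpq_neq0; rewrite -tq_p => ->; rewrite mulr0.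
have tq_neq0 : tq != 0 by apply: contraNneq tpq_neq0; rewrite -tq_p => ->; rewrite mul0r.
have : ((size tq + size p).-1 = (size tp + size q).-1)%N by rewrite -!size_mul // tq_p.
have := size_poly_gt0 p; rewrite p_neq0; clearbody tp tq; lia.
Qed.

Lemma exists_lowest_coef p :
  p != 0 -> exists2 e, p`_e != 0 & forall k, (k < e)%N -> p`_k = 0.
Proof.
move=> p_neq0; have : exists k, p`_k != 0.
  by exists (size p).-1; rewrite -lead_coefE lead_coef_eq0.
case/ex_minnP => e pe e_min; exists e => // k lt_ke.
by apply/eqP; apply: contraTT lt_ke => /e_min; rewrite -leqNgt.
Qed.

Lemma take_poly_neq0_lowest p e a : p`_e != 0 -> (forall k, (k < e)%N -> p`_k = 0) ->
  (take_poly a p != 0) = (e < a)%N.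
Proof.
move=> pe p_low; apply/idP/idP => [|lt_ea].
  apply: contraNT; rewrite -leqNgt => le_ae; apply/eqP/polyP => k.
  rewrite coef_take_poly coef0; case: ifP => // lt_ka.
  exact: p_low (leq_trans lt_ka le_ae).
have := coef_take_poly a p e; rewrite lt_ea => take_e.
by apply: contraNN pe => /eqP take0; rewrite -take_e take0 coef0.
Qed.

Lemma size_Xmul_leq p m : (size p < m)%N -> (size ('X * p)%R <= m)%N.
Proof. by move=> lt_pm; apply: leq_trans (size_polyMleq _ _) _; rewrite size_polyX. Qed.

End PolyLemmas.

Lemma card_ord_range n lo hi :
  (hi <= n)%N -> #|[set k : 'I_n | (lo <= k < hi)%N]| = (hi - lo)%N.
Proof.
move=> le_hi_n; rewrite -sum1_card.
rewrite (eq_bigl (fun k : 'I_n => (lo <= k) && (k < hi)))%N => [|k]; last by rewrite inE.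
rewrite -(big_ord_widen_cond n (fun k => lo <= k)%N (fun _ => 1%N) le_hi_n).
rewrite (eq_bigl (fun k : 'I_hi => xpredT k && (lo <= k)%N)) //.
by rewrite -(big_geq_mkord lo hi xpredT (fun _ => 1%N)) sum_nat_const_nat muln1.
Qed.

Lemma sum_card_exchange (I J : finType) (B : {pred J}) (R : I -> J -> bool) :
  (\sum_i #|[set j in B | R i j]| = \sum_(j in B) #|[set i | R i j]|)%N.
Proof.
transitivity (\sum_i \sum_(j in B) (if R i j then 1 else 0))%N.
  by apply: eq_bigr => i _; rewrite -big_mkcondr sum1dep_card.
by rewrite exchange_big; apply: eq_bigr => j _; rewrite -big_mkcond sum1dep_card.
Qed.

Section Fibers.
Variables (F : finFieldType) (v : nat).

Lemma card_coef_fiber (K : {set 'rV[F]_v}) (d : 'rV[F]_v) i :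
  (rVpoly d)`_i != 0 -> (forall c a, c \in K -> c + a *: d \in K) ->
  #|K| = (#|F| * #|[set c in K | ((rVpoly c)`_i == 0)%R]|)%N.
Proof.
move=> d_i_neq0 K_stable; set K0 := [set c in K | _].
have fiber a : #|[set c in K | (rVpoly c)`_i == a]| = #|K0|.
  pose t := (a / (rVpoly d)`_i) *: d.
  rewrite -(card_imset K0 (addIr t)); apply: eq_card => c; rewrite !inE.
  have coef_shift b (e : 'rV[F]_v) :
      (rVpoly (e + b *: d))`_i = (rVpoly e)`_i + b * (rVpoly d)`_i.
    by rewrite linearD linearZ coefD coefZ.
  apply/andP/imsetP => [[cK /eqP ci]|[e]]; rewrite ?inE.
    exists (c + (- (a / (rVpoly d)`_i)) *: d); last by rewrite /t scaleNr addrNK.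
    by rewrite !inE K_stable //= coef_shift ci mulNr mulfVK // subrr.
  case/andP=> eK /eqP ei ->; split; first exact: K_stable.
  by rewrite coef_shift ei add0r mulfVK.
rewrite -sum1_card (partition_big (fun c => (rVpoly c)`_i) xpredT) //=.
rewrite (eq_bigr (fun _ => #|K0|)) => [|a _]; first by rewrite sum_nat_const mulnC.
by rewrite -(fiber a) sum1_card; apply: eq_card => c; rewrite !inE.
Qed.

End Fibers.

Section Series.
Variables (F : fieldType) (n : nat).
Implicit Types y : 'rV[F]_n.

Lemma size_rVpoly y : (size (rVpoly y) <= n)%N.
Proof. exact: size_poly. Qed.

Lemma rVpoly_eq0 y : (rVpoly y == 0) = (y == 0).
Proof. by rewrite -(inj_eq (can_inj rVpolyK)) linear0. Qed.

Definition series y : {poly F} := 1 + 'X * rVpoly y.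

Lemma coef_series y (k : nat) : (series y)`_k = yext y k.
Proof.
by case: k => [|k]; rewrite coefD coef1 coefXM /= ?addr0 // add0r; apply: coef_rVpoly.
Qed.

Lemma series_mul_coef_inj (C : {poly F}) e :
  C`_e != 0 -> (forall k, (k < e)%N -> C`_k = 0) ->
  injective (fun y => [ffun k : 'I_n => (series y * C)`_(k + e.+1)]).
Proof.
move=> Ce C_low y1 y2 /ffunP eq_coef; apply/eqP; rewrite -subr_eq0 -rVpoly_eq0.
apply/negPn/negP => P_neq0; set P := rVpoly _ in P_neq0.
have [k Pk P_low] := exists_lowest_coef P_neq0.
have lt_kn : (k < n)%N.
  rewrite ltnNge; apply: contra Pk => le_nk.
  by rewrite nth_default // (leq_trans (size_rVpoly _) le_nk).
have := eq_coef (Ordinal lt_kn); rewrite !ffunE /= => /eqP.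
rewrite -subr_eq0 -coefB -mulrBl.
have -> : series y1 - series y2 = 'X * P.
  by rewrite /series opprD addrACA subrr add0r -mulrBr /P linearB.
rewrite -addSnnS (coefM_low _ C_low) => [|[|i] lt_ik]; rewrite coefXM //=; last exact: P_low.
by rewrite mulf_eq0 (negbTE Pk) (negbTE Ce).
Qed.

End Series.

Section Annihilator.
Variables (F : finFieldType) (n v : nat).
Implicit Types (y : 'rV[F]_n) (c d : 'rV[F]_v).

Definition annih y a : {set 'rV[F]_v} :=
  [set c | (size (take_poly n.+1 (series y * rVpoly c)) <= a)%N].

Lemma annihP y a c :
  reflect (forall m, (a <= m <= n)%N -> (series y * rVpoly c)`_m = 0) (c \in annih y a).
Proof.
rewrite inE; apply: (iffP (leq_sizeP _ _)) => vanish m => [/andP[le_am le_mn]|le_am].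
  by have := vanish m le_am; rewrite coef_take_poly ltnS le_mn.
by rewrite coef_take_poly; case: ifP => // lt_mn; apply: vanish; rewrite le_am -ltnS.
Qed.

Lemma annih0 y a : 0 \in annih y a.
Proof. by rewrite inE linear0 mulr0 take_poly0r size_poly0. Qed.

Lemma annihW y a b c : (a <= b)%N -> c \in annih y a -> c \in annih y b.
Proof. by move=> le_ab; rewrite !inE => /leq_trans; apply. Qed.

Lemma annihD y a c d x : c \in annih y a -> d \in annih y a -> c + x *: d \in annih y a.
Proof.
move=> /annihP c_ann /annihP d_ann; apply/annihP => m m_range.
by rewrite linearD linearZ mulrDr -scalerAr coefD coefZ c_ann ?d_ann ?mulr0 ?addr0.
Qed.

Lemma annih_Xmul y a c : (size (rVpoly c) < v)%N ->
  c \in annih y a.-1 -> poly_rV ('X * rVpoly c) \in annih y a.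
Proof.
move=> lt_c_v /annihP c_ann; apply/annihP => m /andP[le_am le_mn].
rewrite poly_rV_K ?size_Xmul_leq // mulrCA coefXM.
by case: eqP => // m_neq0; apply: c_ann; lia.
Qed.

Lemma annih_pred_size_lt y u c d : (0 < u)%N -> (u + v <= n.+1)%N ->
  (size (rVpoly c) < size (rVpoly d))%N ->
  c \in annih y u -> d \in annih y u -> c \in annih y u.-1.
Proof.
move=> u_gt0 le_uv_n lt_cd; rewrite !inE => c_ann d_ann; rewrite -ltnS prednK //.
apply: size_take_polyM_lt lt_cd c_ann d_ann => //.
by rewrite addnC (leq_trans _ le_uv_n) // leq_add2l size_rVpoly.
Qed.

Definition lower_annih y u : {set 'rV[F]_v} :=
  [set c in annih y u.-1 | (size (rVpoly c) < v)%N].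

Lemma card_annih_singular y u c0 : (0 < u)%N -> (u + v <= n.+1)%N ->
  c0 != 0 -> c0 \in annih y u -> #|annih y u| = (#|F| * #|lower_annih y u|)%N.
Proof.
move=> u_gt0 le_uv_n c0_neq0 c0_ann; set K := annih y u.
have [d dK d_max] : exists2 d, d \in K &
    forall c, c \in K -> (size (rVpoly c) <= size (rVpoly d))%N.
  by case: (arg_maxnP (fun c => size (rVpoly c)) c0_ann) => d; exists d.
have d_neq0 : rVpoly d != 0.
  by rewrite -size_poly_gt0 (leq_trans _ (d_max _ c0_ann)) // size_poly_gt0 rVpoly_eq0.
set k := (size (rVpoly d)).-1.
have d_k : (rVpoly d)`_k != 0 by rewrite -lead_coefE lead_coef_eq0.
rewrite (card_coef_fiber d_k (fun c x cK => annihD x cK dK)); congr (_ * _)%N.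
apply: eq_card => c; rewrite [c \in [set _ in _ | _]]in_set [c \in lower_annih _ _]in_set.
apply/andP/andP => [[cK /eqP c_k]|[c_low lt_c_v]].
  have lt_cd : (size (rVpoly c) < size (rVpoly d))%N.
    have := d_max c cK; rewrite leq_eqVlt => /orP[/eqP eq_cd|//].
    have c_neq0 : rVpoly c != 0 by rewrite -size_poly_gt0 eq_cd size_poly_gt0.
    by move: c_k; rewrite /k -eq_cd -lead_coefE => /eqP; rewrite lead_coef_eq0 (negbTE c_neq0).
  split; first exact: annih_pred_size_lt lt_cd cK dK.
  exact: leq_trans lt_cd (size_rVpoly d).
split; first by apply: annihW c_low; apply: leq_pred.
apply/eqP/nth_default; rewrite /k -ltnS prednK ?size_poly_gt0 //.
have [->|c_neq0] := eqVneq (rVpoly c) 0; first by rewrite size_poly0 size_poly_gt0.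
have := d_max _ (annih_Xmul lt_c_v c_low).
rewrite poly_rV_K; last exact: size_Xmul_leq.
by rewrite mulrC size_mulX.
Qed.
End Annihilator.
Arguments annih {F n} v y a.
Arguments lower_annih {F n} v y u.

Section Preimage.
Variables (F : finFieldType) (n v : nat).

Lemma card_annih_preimset (c : 'rV[F]_v) a :
  c != 0 -> (v <= n)%N -> (a <= n.+1)%N ->
  #|[set y : 'rV[F]_n | c \in annih v y a]| =
  if take_poly a (rVpoly c) != 0 then (#|F| ^ a.-1)%N else 0%N.
Proof.
move=> c_neq0 le_vn le_a_n1; set C := rVpoly c.
have [e Ce C_low] : exists2 e, C`_e != 0 & forall k, (k < e)%N -> C`_k = 0.
  by apply: exists_lowest_coef; rewrite rVpoly_eq0.
have lt_en : (e < n)%N.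
  rewrite ltnNge; apply: contra Ce => le_ne.
  by rewrite nth_default // (leq_trans (size_rVpoly c)) // (leq_trans le_vn).
rewrite (take_poly_neq0_lowest _ Ce C_low); case: ltnP => [lt_ea|le_ae]; last first.
  apply/eqP; rewrite cards_eq0; apply/eqP/setP => y; rewrite inE in_set0.
  apply/negbTE/annihP => /(_ e); rewrite le_ae ltnW // -[e]add0n coefM_low //.
  by rewrite coef_series mul1r => /(_ isT)/eqP; apply/negP.
set T := fun y : 'rV[F]_n => [ffun k : 'I_n => (series y * C)`_(k + e.+1)].
have T_bij : bijective T.
  apply: inj_card_bij (series_mul_coef_inj Ce C_low) _.
  by rewrite card_mx card_ffun card_ord mul1n.
set I := [set k : 'I_n | (a.-1 - e <= k < n - e)%N].
have -> : [set y | c \in annih v y a] = T @^-1: pffun_on 0 (~: I) predT.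
  apply/setP => y; rewrite in_set [X in _ = X]in_set.
  apply/annihP/pffun_onP => [vanish|[supp _] m /andP[le_am le_mn]].
    split=> //; apply/subsetP => k; rewrite !inE ffunE; apply: contraNN => k_I.
    by apply/eqP/vanish; lia.
  have lt_m_n : (m - e.+1 < n)%N by lia.
  have k_I : Ordinal lt_m_n \in I by rewrite inE /=; lia.
  apply/eqP; apply: contraTT k_I => Tk_neq0; have := subsetP supp (Ordinal lt_m_n).
  by rewrite !inE ffunE /= subnK ?Tk_neq0 //; lia.
rewrite on_card_preimset; last exact: onW_bij.
rewrite (card_pffun_on (0 : F) (~: I) predT) cardsCs setCK card_ord card_ord_range; last lia.
by congr expn; lia.
Qed.

Lemma sum_card_annih (A : {set 'rV[F]_v}) a : 0 \in A -> (v <= n)%N -> (a <= n.+1)%N ->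
  (\sum_(y : 'rV[F]_n) #|annih v y a :&: A| =
   #|F| ^ n + #|F| ^ a.-1 * #|[set c in A | (take_poly a (rVpoly c) != 0)%R]|)%N.
Proof.
move=> A0 le_vn le_a_n1.
rewrite (eq_bigr (fun y => #|[set c in A | c \in annih v y a]|)) => [|y _]; last first.
  by apply: eq_card => c; rewrite !inE andbC.
rewrite sum_card_exchange (bigD1 0) //=.
have -> : [set y : 'rV[F]_n | 0 \in annih v y a] = setT.
  by apply/setP => y; rewrite in_set annih0 in_setT.
rewrite cardsT card_mx mul1n; congr addn.
rewrite (eq_bigr (fun c : 'rV[F]_v =>
    if take_poly a (rVpoly c) != 0 then (#|F| ^ a.-1)%N else 0%N)) => [|c /andP[_ c_neq0]];
  last exact: card_annih_preimset.
rewrite -big_mkcondr sum_nat_cond_const mulnC; congr muln; apply: eq_card => c; rewrite !inE.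
have [->|c_neq0] := eqVneq c 0; last by rewrite andbT.
have /eqP -> : rVpoly (0 : 'rV[F]_v) == 0 by rewrite rVpoly_eq0.
by rewrite take_poly0r eqxx !andbF.
Qed.

End Preimage.

Section Shift.
Variables (F : finFieldType) (v : nat).
Hypothesis v_gt0 : (0 < v)%N.

Lemma card_coef0_eq0 : #|[set c : 'rV[F]_v | (rVpoly c)`_0 == 0]| = (#|F| ^ v.-1)%N.
Proof.
have one_0 : (rVpoly (poly_rV 1 : 'rV[F]_v))`_0 != 0.
  by rewrite poly_rV_K ?coef1 ?oner_eq0 // size_poly1.
have := card_coef_fiber one_0 (fun c a _ => in_setT (c + a *: _)).
rewrite cardsT card_mx mul1n -(prednK v_gt0) expnS => /eqP.
rewrite eqn_pmul2l ?card_gt0 => [/eqP ->|]; last by apply/card_gt0P; exists 0.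
by apply: eq_card => c; rewrite !inE.
Qed.

Lemma card_shift (Q : pred {poly F}) :
  #|[set c : 'rV[F]_v | (size (rVpoly c) < v)%N & Q ('X * rVpoly c)]| =
  #|[set c : 'rV[F]_v | ((rVpoly c)`_0 == 0) && Q (rVpoly c)]|.
Proof.
pose sh (c : 'rV[F]_v) : 'rV[F]_v := poly_rV ('X * rVpoly c).
have shK c : (size (rVpoly c) < v)%N -> rVpoly (sh c) = 'X * rVpoly c.
  by move=> lt_c_v; rewrite poly_rV_K // size_Xmul_leq.
rewrite -(card_in_imset (f := sh)) => [|c1 c2]; last first.
  rewrite !inE => /andP[lt_c1 _] /andP[lt_c2 _] /(congr1 rVpoly).
  by rewrite !shK // => /(mulfI (negbT (polyX_eq0 _))) /(can_inj rVpolyK).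
apply: eq_card => d; rewrite inE; apply/imsetP/andP => [[c]|[d0 Qd]].
  by rewrite inE => /andP[lt_c_v Qc] ->; rewrite shK // coefXM.
have Xdrop : 'X * drop_poly 1 (rVpoly d) = rVpoly d.
  have take0 : take_poly 1 (rVpoly d) = 0.
    by apply/polyP => -[|k]; rewrite coef_take_poly coef0 //=; apply/eqP.
  by rewrite -[RHS](poly_take_drop 1) take0 add0r expr1 mulrC.
have lt_drop_v : (size (drop_poly 1 (rVpoly d)) < v)%N.
  by rewrite size_drop_poly subn1; case: (size _) (size_rVpoly d).
exists (poly_rV (drop_poly 1 (rVpoly d))); last first.
  by apply: (can_inj rVpolyK); rewrite shK poly_rV_K ?Xdrop // ltnW.
by rewrite inE poly_rV_K ?lt_drop_v ?Xdrop // ltnW.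
Qed.

Lemma card_take_poly_neq0 u : (0 < u)%N ->
  (#|[set c : 'rV[F]_v | (take_poly u (rVpoly c) != 0)%R]| + #|F| ^ v.-1 =
   #|[set c : 'rV[F]_v | (size (rVpoly c) < v) & (take_poly u.-1 (rVpoly c) != 0)%R]| +
   #|F| ^ v)%N.
Proof.
move=> u_gt0; set Z := [set c : 'rV[F]_v | (rVpoly c)`_0 == 0].
have take_X (p : {poly F}) : (take_poly u ('X * p) != 0) = (take_poly u.-1 p != 0).
  by rewrite mulrC -['X]expr1 take_polyMXn subn1 mulf_eq0 expf_eq0 polyX_eq0 andbF orbF.
have -> : (#|[set c : 'rV[F]_v | (size (rVpoly c) < v) & (take_poly u.-1 (rVpoly c) != 0)%R]| =
    #|[set c : 'rV[F]_v | (size (rVpoly c) < v) & (take_poly u ('X * rVpoly c) != 0)%R]|)%N.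
  by apply: eq_card => c; rewrite !inE take_X.
have card_rV : #|{: 'rV[F]_v}| = (#|F| ^ v)%N by rewrite card_mx mul1n.
rewrite (card_shift (fun p => take_poly u p != 0)) -card_coef0_eq0 -card_rV -(cardsC Z).
rewrite [(#|Z| + _)%N]addnC addnA; congr addn.
rewrite -(cardsID Z); congr addn; apply: eq_card => c; rewrite !inE; first by rewrite andbC.
rewrite andb_idr // => c0_neq0; apply: contraNneq c0_neq0 => take0.
by have := coef_take_poly u (rVpoly c) 0; rewrite u_gt0 take0 coef0 => <-.
Qed.

End Shift.

Section Toeplitz.
Variables (F : finFieldType) (u v : nat).
Hypotheses (u_gt0 : (0 < u)%N) (v_gt0 : (0 < v)%N).
Implicit Types (y : 'rV[F]_(u + v - 1)) (c : 'rV[F]_v).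

Lemma coef_mul_Jmat y c j : (c *m Jmat y) 0 j = (series y * rVpoly c)`_(u + j).
Proof.
rewrite mxE [rVpoly c]poly_def mulr_sumr coef_sum; apply: eq_bigr => i _.
rewrite mxE -scalerAr coefZ coefMXn valK coef_series; congr (_ * _).
case: ltnP => [lt_uj_i|le_i_uj]; last by congr yext; lia.
have : (u%:Z - (i : nat)%:Z + (j : nat)%:Z < 0)%R by lia.
by case: (_ - _ + _)%R.
Qed.

Lemma mul_Jmat_eq0 y c : (c *m Jmat y == 0) = (c \in annih v y u).
Proof.
apply/eqP/annihP => [cJ0 m /andP[le_um le_mn]|vanish].
  have lt_mu_v : (m - u < v)%N by lia.
  have := congr1 (fun r : 'rV[F]_v => r 0 (Ordinal lt_mu_v)) cJ0.
  by rewrite coef_mul_Jmat mxE subnKC.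
by apply/rowP => j; rewrite coef_mul_Jmat mxE vanish //; have := ltn_ord j; lia.
Qed.

Lemma card_annih_Jmat y :
  (#|F|.-1 * (\det (Jmat y) == 0%R) + #|F| * #|lower_annih v y u| = #|annih v y u| + #|F|.-1)%N.
Proof.
case: det0P => [[c c_neq0 cJ0]|J_inj].
  have c_ann : c \in annih v y u by rewrite -mul_Jmat_eq0 cJ0.
  by rewrite (card_annih_singular u_gt0 _ c_neq0 c_ann) ?muln1 1?addnC //; lia.
have annih_0 a : (a <= u)%N -> annih v y a = [set 0].
  move=> le_au; apply/setP => c; rewrite in_set1.
  apply/idP/eqP => [c_ann|->]; last exact: annih0.
  apply/eqP; apply: contra_notT J_inj => c_neq0; exists c => //.
  by apply/eqP; rewrite mul_Jmat_eq0; apply: annihW c_ann.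
have -> : lower_annih v y u = [set 0].
  apply/setP => c; rewrite /lower_annih annih_0 ?leq_pred // !inE.
  by case: eqP => // ->; rewrite linear0 size_poly0.
by rewrite annih_0 // !cards1 muln0 muln1 add1n prednK // ltnW // card_finNzRing_gt1.
Qed.

Lemma sum_card_annih_det0 :
  (#|F|.-1 * #|[set y : 'rV[F]_(u + v - 1) | \det (Jmat y) == 0%R]| +
   #|F| * \sum_(y : 'rV[F]_(u + v - 1)) #|lower_annih v y u| =
   \sum_(y : 'rV[F]_(u + v - 1)) #|annih v y u| + #|F|.-1 * #|F| ^ (u + v - 1))%N.
Proof.
transitivity (\sum_(y : 'rV[F]_(u + v - 1))
    (#|F|.-1 * (\det (Jmat y) == 0%R) + #|F| * #|lower_annih v y u|))%N.
  rewrite big_split /= -!big_distrr /= -sum1dep_card big_mkcond /=.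
  by congr (_ * _ + _)%N; apply: eq_bigr => y _; case: eqP.
rewrite (eq_bigr _ (fun y _ => card_annih_Jmat y)) big_split /=.
by rewrite sum_nat_const card_mx mul1n mulnC.
Qed.

Lemma sum_card_annih_Jmat :
  (\sum_(y : 'rV[F]_(u + v - 1)) #|annih v y u| =
   #|F| ^ (u + v - 1) + #|F| ^ u.-1 * #|[set c : 'rV[F]_v | (take_poly u (rVpoly c) != 0)%R]|)%N.
Proof.
under eq_bigr do rewrite -[annih v _ u]setIT.
rewrite sum_card_annih ?inE //; try lia.
by congr (_ + _ * _)%N; apply: eq_card => c; rewrite !inE.
Qed.

Lemma sum_card_lower_annih :
  (#|F| * \sum_(y : 'rV[F]_(u + v - 1)) #|lower_annih v y u| =
   #|F| ^ (u + v) + #|F| ^ u.-1 *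
     #|[set c : 'rV[F]_v | (size (rVpoly c) < v) & (take_poly u.-1 (rVpoly c) != 0)%R]|)%N.
Proof.
under eq_bigr do rewrite /lower_annih setIdE.
rewrite sum_card_annih ?inE ?linear0 ?size_poly0 //; try lia.
rewrite mulnDr -expnS (_ : (u + v - 1).+1 = u + v)%N; last lia.
set B := #|_|; set B' := #|_|; have -> : B = B' by apply: eq_card => c; rewrite !inE.
congr addn; have [le_u1|lt_1u] := leqP u 1; last first.
  by rewrite mulnA -expnS; congr (_ ^ _ * _)%N; lia.
suff -> : B' = 0%N by rewrite !muln0.
apply/eqP; rewrite cards_eq0; apply/eqP/setP => c.
by rewrite !inE (_ : u.-1 = 0%N) ?take_poly0l ?eqxx ?andbF //; lia.
Qed.

Lemma sum_card_annih_expn :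
  (#|F|.-1 * #|F| ^ (u + v - 2) +
   #|F| * \sum_(y : 'rV[F]_(u + v - 1)) #|lower_annih v y u| =
   \sum_(y : 'rV[F]_(u + v - 1)) #|annih v y u| + #|F|.-1 * #|F| ^ (u + v - 1))%N.
Proof.
set q := #|F|; have q_gt0 : (0 < q)%N := ltnW (card_finNzRing_gt1 F).
have shift := congr1 (muln (q ^ u.-1)) (card_take_poly_neq0 F v_gt0 u_gt0).
have [e1 e2] : (u.-1 + v.-1 = u + v - 2)%N /\ (u.-1 + v = u + v - 1)%N by lia.
rewrite !mulnDr -!expnD e1 e2 in shift.
have expS k : (q ^ k.+1 = q ^ k + q.-1 * q ^ k)%N by rewrite expnS -{1}(prednK q_gt0) mulSn.
have := expS (u + v - 2)%N; rewrite (_ : (u + v - 2).+1 = u + v - 1)%N; last lia.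
have := expS (u + v - 1)%N; rewrite (_ : (u + v - 1).+1 = u + v)%N; last lia.
rewrite sum_card_lower_annih sum_card_annih_Jmat -/q; move: shift.
move: (q ^ (u + v))%N (q ^ (u + v - 1))%N (q ^ (u + v - 2))%N (q ^ u.-1)%N => Q1 Q P Y.
by move: #|[set c | _ & _]| #|[set c | _]| => B A; lia.
Qed.

End Toeplitz.

Unset Implicit Arguments.

Theorem corollary5 (F : finFieldType) (u v : nat) (hu : (0 < u)%N) (hv : (0 < v)%N) :
  #|[set y : 'rV[F]_(u + v - 1) | \det (Jmat y) == 0]| = (#|F| ^ (u + v - 2))%N.
Proof.
have q1_gt0 : (0 < #|F|.-1)%N by rewrite ltn_predRL card_finNzRing_gt1.
have := sum_card_annih_det0 F hu hv; rewrite -(sum_card_annih_expn F hu hv) => /addIn/eqP.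
by rewrite eqn_pmul2l // => /eqP.
Qed.
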